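(* For any $\sigma\in\mathcal K$ and $\beta\in\mathcal{KL}$ there exist $\hat\rho\in\mathcal K$ and $\hat\beta\in\mathcal{KL}$ such that $\min\{\sigma(s),\beta(r,t)\}\le\hat\beta\big(s,\ \tfrac{t}{1+\hat\rho(r)}\big)$ for all $t,r,s\ge0$.
   Context: Class $\mathcal K$: continuous strictly increasing $\sigma:\mathbb R_{\ge0}\to\mathbb R_{\ge0}$ with $\sigma(0)=0$. Class $\mathcal{KL}$: continuous $\beta:\mathbb R_{\ge0}\times\mathbb R_{\ge0}\to\mathbb R_{\ge0}$ such that $\beta(\cdot,t)\in\mathcal K$ for each $t\ge0$ and, for each $s\ge0$, $\beta(s,t)$ decreases to $0$ as $t\to\infty$. *)

(* concrete reals R. Functions on R_{>=0} are modelled as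
   functions R -> R whose behaviour is only constrained on [0, +oo). *)
From Stdlib Require Import Reals.
Open Scope R_scope.

Definition cont_nonneg (f : R -> R) : Prop :=
  forall x, 0 <= x -> forall eps, 0 < eps -> exists delta, 0 < delta /\
    forall y, 0 <= y -> Rabs (y - x) < delta -> Rabs (f y - f x) < eps.

Definition cont2_nonneg (g : R -> R -> R) : Prop :=
  forall x t, 0 <= x -> 0 <= t -> forall eps, 0 < eps -> exists delta, 0 < delta /\
    forall y u, 0 <= y -> 0 <= u -> Rabs (y - x) < delta -> Rabs (u - t) < delta ->
      Rabs (g y u - g x t) < eps.

Definition classK (sigma : R -> R) : Prop :=
  cont_nonneg sigma /\
  (forall x, 0 <= x -> 0 <= sigma x) /\
  (forall x y, 0 <= x -> x < y -> sigma x < sigma y) /\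
  sigma 0 = 0.

Definition classKL (beta : R -> R -> R) : Prop :=
  cont2_nonneg beta /\
  (forall s t, 0 <= s -> 0 <= t -> 0 <= beta s t) /\
  (forall t, 0 <= t -> classK (fun s => beta s t)) /\
  (forall s, 0 <= s ->
     (forall t1 t2, 0 <= t1 -> t1 <= t2 -> beta s t2 <= beta s t1) /\
     (forall eps, 0 < eps -> exists T, 0 <= T /\
        forall t, T <= t -> beta s t < eps)).

(* Choose times c_n after which beta(n+2, .) < 2^-(n+1), and the class-K function
   rho(r) = r + sum_n c_n max(0, r - n), so that rho(n+1) >= c_n.  For r in [n, n+1] and tau >= 1 we then have
   beta(r, tau (1 + rho r)) <= g_n(tau) := beta(n+1, tau (1 + rho n)), and
   g_n <= K 2^-n, so phi = sum_n g_n is a continuous, nonincreasing function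
   tending to 0 which bounds beta(r, t) as soon as tau = t / (1 + rho r) >= 1.
   In beta_hat(s, tau) = beta(s, tau) + max(0, sigma s - max(0, tau - 1))
   + min(sigma s, phi tau), the second summand covers tau <= 1, the third
   tau >= 1, and the first makes beta_hat strictly increasing in s. *)
From Stdlib Require Import Reals Lra Lia ZArith IndefiniteDescription.
Open Scope R_scope.

Ltac case_Rabs_Rmin_Rmax := unfold Rmax, Rmin in *; repeat match goal with
  | |- context [Rle_dec ?a ?b] => destruct (Rle_dec a b)
  | H : context [Rle_dec ?a ?b] |- _ => destruct (Rle_dec a b)
  | |- context [Rabs ?x] => unfold Rabs at 1; destruct (Rcase_abs x)
  | H : context [Rabs ?x] |- _ => unfold Rabs at 1 in H; destruct (Rcase_abs x)
  end.

Definition nonexpansive2 (op : R -> R -> R) : Prop :=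
  forall a b a' b', Rabs (op a b - op a' b') <= Rabs (a - a') + Rabs (b - b').

Lemma nonexpansive2_Rplus : nonexpansive2 Rplus.
Proof. intros a b a' b'; case_Rabs_Rmin_Rmax; lra. Qed.

Lemma nonexpansive2_Rmin : nonexpansive2 Rmin.
Proof. intros a b a' b'; case_Rabs_Rmin_Rmax; lra. Qed.

Lemma nonexpansive2_clip : nonexpansive2 (fun a b => Rmax 0 (a - Rmax 0 (b - 1))).
Proof. intros a b a' b'; case_Rabs_Rmin_Rmax; lra. Qed.

Lemma Rmax_nonexpansive_r a x y : Rabs (Rmax a x - Rmax a y) <= Rabs (x - y).
Proof. case_Rabs_Rmin_Rmax; lra. Qed.

Lemma cont_nonneg_of_continuity f : continuity f -> cont_nonneg f.
Proof.
  intros Hf x _ eps heps.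
  destruct (Hf x eps heps) as [d [hd Hd]].
  exists d; split; [lra|]. intros y _ hyx.
  destruct (Req_dec y x) as [->|hne].
  - rewrite Rminus_diag, Rabs_R0; lra.
  - apply (Hd y). repeat split; auto.
Qed.

Lemma cont2_nonneg_comp op f g :
  nonexpansive2 op -> cont2_nonneg f -> cont2_nonneg g ->
  cont2_nonneg (fun s t => op (f s t) (g s t)).
Proof.
  intros Hop Hf Hg x t hx ht eps heps.
  destruct (Hf x t hx ht (eps / 2)) as [d1 [hd1 H1]]; [lra|].
  destruct (Hg x t hx ht (eps / 2)) as [d2 [hd2 H2]]; [lra|].
  exists (Rmin d1 d2); split; [apply Rmin_pos; lra|].
  intros y u hy hu hyx hut.
  assert (Rabs (y - x) < d1 /\ Rabs (y - x) < d2) as [] by (case_Rabs_Rmin_Rmax; lra).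
  assert (Rabs (u - t) < d1 /\ Rabs (u - t) < d2) as [] by (case_Rabs_Rmin_Rmax; lra).
  specialize (H1 y u hy hu ltac:(assumption) ltac:(assumption)).
  specialize (H2 y u hy hu ltac:(assumption) ltac:(assumption)).
  specialize (Hop (f y u) (g y u) (f x t) (g x t)). lra.
Qed.

Lemma cont2_nonneg_fst f : cont_nonneg f -> cont2_nonneg (fun s _ => f s).
Proof.
  intros Hf x t hx _ eps heps. destruct (Hf x hx eps heps) as [d [hd Hd]].
  exists d; split; [lra|]. intros; apply Hd; auto.
Qed.

Lemma cont2_nonneg_snd f : cont_nonneg f -> cont2_nonneg (fun _ t => f t).
Proof.
  intros Hf x t _ ht eps heps. destruct (Hf t ht eps heps) as [d [hd Hd]].
  exists d; split; [lra|]. intros; apply Hd; auto.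
Qed.

Lemma cont_nonneg_section g t : cont2_nonneg g -> 0 <= t -> cont_nonneg (fun s => g s t).
Proof.
  intros Hg ht x hx eps heps. destruct (Hg x t hx ht eps heps) as [d [hd Hd]].
  exists d; split; [lra|]. intros y hy hyx. apply Hd; auto.
  rewrite Rminus_diag, Rabs_R0; lra.
Qed.

Lemma sum_f_R0_ge_term f N k :
  (forall n, 0 <= f n) -> (k <= N)%nat -> f k <= sum_f_R0 f N.
Proof.
  intros Hf. induction N as [|N IH]; intros hk.
  - replace k with 0%nat by lia. simpl; lra.
  - rewrite tech5. destruct (Nat.eq_dec k (S N)) as [->|hne].
    + pose proof (cond_pos_sum f N Hf). lra.
    + specialize (IH ltac:(lia)). specialize (Hf (S N)). lra.
Qed.

Lemma sum_f_R0_increment_le f h N k :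
  (forall n, f n <= h n) ->
  sum_f_R0 f (N + k) - sum_f_R0 f N <= sum_f_R0 h (N + k) - sum_f_R0 h N.
Proof.
  intros Hfh. induction k as [|k IH].
  - rewrite Nat.add_0_r. lra.
  - rewrite Nat.add_succ_r, !tech5. specialize (Hfh (S (N + k))). lra.
Qed.

Lemma Un_cv_le_eventually u l b N :
  Un_cv u l -> (forall m, (N <= m)%nat -> u m <= b) -> l <= b.
Proof.
  intros Hu Hb. destruct (Rle_dec l b) as [|hlb]; [assumption|]. exfalso.
  destruct (Hu (l - b)) as [M HM]; [lra|].
  specialize (HM (max N M) ltac:(lia)). specialize (Hb (max N M) ltac:(lia)).
  unfold Rdist in HM. case_Rabs_Rmin_Rmax; lra.
Qed.

Lemma geometric_majorant_summable K :
  Un_cv (sum_f_R0 (fun n => K * (/ 2) ^ n)) (K * 2).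
Proof.
  assert (Hgeom : Un_cv (sum_f_R0 (fun n => 1 * (/ 2) ^ n)) (/ (1 - / 2))).
  { apply GP_infinite. rewrite Rabs_pos_eq; lra. }
  replace (/ (1 - / 2)) with 2 in Hgeom by field.
  assert (Hconst : Un_cv (fun _ => K) K).
  { intros eps heps. exists 0%nat. intros. unfold Rdist. rewrite Rminus_diag, Rabs_R0. lra. }
  apply Un_cv_ext with (fun N => K * sum_f_R0 (fun n => 1 * (/ 2) ^ n) N).
  - intros N. rewrite scal_sum. apply sum_eq. intros. ring.
  - exact (CV_mult _ _ _ _ Hconst Hgeom).
Qed.

Definition nat_above (r : R) : nat := Z.to_nat (up r).

Lemma nat_above_gt r : 0 <= r -> r < INR (nat_above r).
Proof.
  intros hr. unfold nat_above. destruct (archimed r) as [hup _].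
  assert (0 < up r)%Z by (apply lt_0_IZR; lra).
  rewrite INR_IZR_INZ, Z2Nat.id by lia. lra.
Qed.

Lemma nat_bracket r : 0 <= r -> exists n : nat, INR n <= r <= INR n + 1.
Proof.
  intros hr.
  enough (H : forall N, r <= INR N -> exists n : nat, INR n <= r <= INR n + 1).
  { apply (H (nat_above r)). left. apply nat_above_gt, hr. }
  induction N as [|N IH]; intros hN.
  - exists 0%nat. simpl in *. lra.
  - destruct (Rle_dec r (INR N)) as [hle|hgt]; [exact (IH hle)|].
    exists N. rewrite S_INR in hN. lra.
Qed.

Section Ramp.
Variable c : nat -> R.
Hypothesis c_nonneg : forall n, 0 <= c n.

Definition ramp_sum (M : nat) (r : R) : R :=
  sum_f_R0 (fun n => c n * Rmax 0 (r - INR n)) M.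

(* The ramps with n >= r vanish at r, so truncating at [nat_above r] loses nothing. *)
Definition ramp_fun (r : R) : R := r + ramp_sum (nat_above r) r.

Lemma ramp_sum_extend M k r : r <= INR M -> ramp_sum (M + k) r = ramp_sum M r.
Proof.
  intros hr. induction k as [|k IH].
  - rewrite Nat.add_0_r; reflexivity.
  - rewrite Nat.add_succ_r. unfold ramp_sum in *. rewrite tech5, IH.
    assert (INR M < INR (S (M + k))) by (apply lt_INR; lia).
    rewrite Rmax_left; [ring|lra].
Qed.

Lemma ramp_fun_eq M r : 0 <= r -> r <= INR M -> ramp_fun r = r + ramp_sum M r.
Proof.
  intros hr hM. unfold ramp_fun. f_equal.
  pose proof (nat_above_gt r hr) as hN.
  destruct (Nat.le_ge_cases (nat_above r) M) as [h|h].
  - replace M with (nat_above r + (M - nat_above r))%nat by lia.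
    rewrite ramp_sum_extend; [reflexivity|lra].
  - replace (nat_above r) with (M + (nat_above r - M))%nat by lia.
    apply ramp_sum_extend, hM.
Qed.

Lemma ramp_sum_nonneg M r : 0 <= ramp_sum M r.
Proof.
  apply cond_pos_sum. intros n. apply Rmult_le_pos; [apply c_nonneg|apply Rmax_l].
Qed.

Lemma ramp_sum_le M x y : x <= y -> ramp_sum M x <= ramp_sum M y.
Proof.
  intros hxy. apply sum_Rle. intros n _.
  apply Rmult_le_compat_l; [apply c_nonneg|]. apply Rle_max_compat_l. lra.
Qed.

Lemma ramp_sum_lipschitz M x y :
  Rabs (ramp_sum M y - ramp_sum M x) <= sum_f_R0 c M * Rabs (y - x).
Proof.
  assert (Hterm : forall n, Rabs (c n * Rmax 0 (y - INR n) - c n * Rmax 0 (x - INR n))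
                            <= c n * Rabs (y - x)).
  { intros n. rewrite <- Rmult_minus_distr_l, Rabs_mult, (Rabs_pos_eq (c n)) by apply c_nonneg.
    apply Rmult_le_compat_l; [apply c_nonneg|].
    replace (y - x) with ((y - INR n) - (x - INR n)) by ring.
    apply Rmax_nonexpansive_r. }
  unfold ramp_sum. induction M as [|M IH].
  - apply Hterm.
  - rewrite !tech5, Rmult_plus_distr_r.
    pose proof (nonexpansive2_Rplus
      (sum_f_R0 (fun n => c n * Rmax 0 (y - INR n)) M) (c (S M) * Rmax 0 (y - INR (S M)))
      (sum_f_R0 (fun n => c n * Rmax 0 (x - INR n)) M) (c (S M) * Rmax 0 (x - INR (S M)))).
    specialize (Hterm (S M)). lra.
Qed.

Lemma ramp_fun_continuous : cont_nonneg ramp_fun.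
Proof.
  intros x hx eps heps.
  set (M := nat_above (x + 1)).
  assert (hM : x + 1 <= INR M) by (left; apply nat_above_gt; lra).
  set (L := sum_f_R0 c M).
  assert (hL : 0 <= L) by (apply cond_pos_sum, c_nonneg).
  exists (Rmin 1 (eps / (1 + L))). split.
  { apply Rmin_pos; [lra|]. apply Rdiv_pos_pos; lra. }
  intros y hy hyx.
  assert (Rabs (y - x) < 1 /\ Rabs (y - x) < eps / (1 + L)) as [h1 h2]
    by (case_Rabs_Rmin_Rmax; lra).
  assert (y <= x + 1) by (case_Rabs_Rmin_Rmax; lra).
  rewrite (ramp_fun_eq M y), (ramp_fun_eq M x) by lra.
  apply (Rmult_lt_compat_r (1 + L)) in h2; [|lra].
  replace (eps / (1 + L) * (1 + L)) with eps in h2 by (field; lra).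
  pose proof (ramp_sum_lipschitz M x y) as Hlip. fold L in Hlip.
  pose proof (nonexpansive2_Rplus y (ramp_sum M y) x (ramp_sum M x)).
  lra.
Qed.

Lemma ramp_fun_classK : classK ramp_fun.
Proof.
  split; [exact ramp_fun_continuous|split; [|split]].
  - intros x hx. unfold ramp_fun. pose proof (ramp_sum_nonneg (nat_above x) x). lra.
  - intros x y hx hxy.
    assert (hy : y < INR (nat_above y)) by (apply nat_above_gt; lra).
    rewrite (ramp_fun_eq (nat_above y) y), (ramp_fun_eq (nat_above y) x) by lra.
    pose proof (ramp_sum_le (nat_above y) x y). lra.
  - unfold ramp_fun, ramp_sum. rewrite sum_eq_R0; [ring|].
    intros n _. rewrite Rmax_left; [ring|]. pose proof (pos_INR n). lra.
Qed.

Lemma ramp_fun_ge m : c m <= ramp_fun (INR (S m)).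
Proof.
  rewrite (ramp_fun_eq (S m)) by (try apply pos_INR; lra).
  assert (Hterm : c m * Rmax 0 (INR (S m) - INR m) <= ramp_sum (S m) (INR (S m))).
  { apply (sum_f_R0_ge_term (fun n => c n * Rmax 0 (INR (S m) - INR n))); [|lia].
    intros n. apply Rmult_le_pos; [apply c_nonneg|apply Rmax_l]. }
  rewrite S_INR in *. replace (INR m + 1 - INR m) with 1 in Hterm by ring.
  rewrite Rmax_right in Hterm by lra. pose proof (pos_INR m). lra.
Qed.

End Ramp.

Definition classL (phi : R -> R) : Prop :=
  cont_nonneg phi /\
  (forall t, 0 <= t -> 0 <= phi t) /\
  (forall t1 t2, 0 <= t1 -> t1 <= t2 -> phi t2 <= phi t1) /\
  (forall eps, 0 < eps -> exists T, forall t, T <= t -> phi t < eps).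

Section Envelope.
Variables (g : nat -> R -> R) (M : nat -> R) (L : R).
Hypothesis g_continuity : forall n, continuity (g n).
Hypothesis g_nonneg : forall n y, 0 <= g n y.
Hypothesis g_le_majorant : forall n y, g n y <= M n.
Hypothesis majorant_summable : Un_cv (sum_f_R0 M) L.
Hypothesis g_antitone : forall n y1 y2, y1 <= y2 -> g n y2 <= g n y1.
Hypothesis g_vanishing : forall n eps, 0 < eps -> exists T, forall y, T <= y -> g n y < eps.

Lemma majorant_nonneg n : 0 <= M n.
Proof. pose proof (g_nonneg n 0). pose proof (g_le_majorant n 0). lra. Qed.

Lemma g_CVN : CVN_R g.
Proof.
  intros r. exists M, L. split.
  - apply Un_cv_ext with (sum_f_R0 M); [|exact majorant_summable].
    intros N. apply sum_eq. intros n _. rewrite Rabs_pos_eq; [reflexivity|apply majorant_nonneg].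
  - intros n y _. rewrite Rabs_pos_eq; [apply g_le_majorant|apply g_nonneg].
Qed.

Let envelope := SFL g (CVN_R_CVS g g_CVN).

Lemma envelope_cv y : Un_cv (fun N => SP g N y) (envelope y).
Proof. unfold envelope, SFL. destruct (CVN_R_CVS g g_CVN y) as [l Hl]. exact Hl. Qed.

Lemma g_le_envelope n y : g n y <= envelope y.
Proof.
  apply Rle_trans with (SP g n y).
  - apply (sum_f_R0_ge_term (fun k => g k y)); [intros; apply g_nonneg|lia].
  - apply growing_ineq; [|apply envelope_cv].
    intros m. unfold SP. rewrite tech5. pose proof (g_nonneg (S m) y). lra.
Qed.

Lemma envelope_antitone y1 y2 : y1 <= y2 -> envelope y2 <= envelope y1.
Proof.
  intros h. apply Rle_cv_lim with (Un := fun N => SP g N y2) (Vn := fun N => SP g N y1);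
    [|apply envelope_cv|apply envelope_cv].
  intros N. apply sum_Rle. intros n _. apply g_antitone, h.
Qed.

Lemma SP_vanishing N eps : 0 < eps -> exists T, forall y, T <= y -> SP g N y < eps.
Proof.
  revert eps. induction N as [|N IH]; intros eps heps.
  - destruct (g_vanishing 0 eps heps) as [T HT]. exists T. exact HT.
  - destruct (IH (eps / 2)) as [T1 H1]; [lra|].
    destruct (g_vanishing (S N) (eps / 2)) as [T2 H2]; [lra|].
    exists (Rmax T1 T2). intros y hy. unfold SP in *. rewrite tech5.
    specialize (H1 y ltac:(case_Rabs_Rmin_Rmax; lra)).
    specialize (H2 y ltac:(case_Rabs_Rmin_Rmax; lra)). lra.
Qed.

(* The tail of the series beyond N is uniformly bounded by the tail L - sum M N of the majorant. *)
Lemma envelope_vanishing eps : 0 < eps -> exists T, forall y, T <= y -> envelope y < eps.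
Proof.
  intros heps.
  destruct (majorant_summable (eps / 2)) as [N HN]; [lra|].
  specialize (HN N (le_n N)). unfold Rdist in HN.
  destruct (SP_vanishing N (eps / 2)) as [T HT]; [lra|].
  exists T. intros y hy.
  assert (Htail : envelope y <= SP g N y + (L - sum_f_R0 M N)).
  { apply (Un_cv_le_eventually _ _ _ N (envelope_cv y)). intros m hm.
    replace m with (N + (m - N))%nat by lia.
    pose proof (sum_f_R0_increment_le (fun k => g k y) M N (m - N) (fun k => g_le_majorant k y)).
    assert (sum_f_R0 M (N + (m - N)) <= L).
    { apply growing_ineq; [|exact majorant_summable].
      intros k. rewrite tech5. pose proof (majorant_nonneg (S k)). lra. }
    unfold SP. lra. }
  specialize (HT y hy). case_Rabs_Rmin_Rmax; lra.
Qed.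

Lemma exists_classL_envelope : exists phi, classL phi /\ forall n y, g n y <= phi y.
Proof.
  exists envelope. split; [split; [|split; [|split]]|exact g_le_envelope].
  - apply cont_nonneg_of_continuity, SFL_continuity; [exact g_CVN|exact g_continuity].
  - intros t _. pose proof (g_nonneg 0 t). pose proof (g_le_envelope 0 t). lra.
  - intros t1 t2 _. apply envelope_antitone.
  - exact envelope_vanishing.
Qed.

End Envelope.

Lemma classK_le f x y : classK f -> 0 <= x -> x <= y -> f x <= f y.
Proof.
  intros [_ [_ [Hinc _]]] hx hxy.
  destruct (Rle_lt_or_eq_dec x y hxy) as [hlt|heq].
  - left. apply Hinc; assumption.
  - rewrite heq. apply Rle_refl.
Qed.

Section Slices.
Variables (beta : R -> R -> R) (rho : R -> R).
Hypothesis beta_KL : classKL beta.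
Hypothesis rho_K : classK rho.

(* Clamping at 1 keeps the time argument nonnegative, so each slice is continuous
   on all of R (as SFL_continuity requires); for y >= 1 it is g_n(y). *)
Definition slice (n : nat) (y : R) : R := beta (INR n + 1) (Rmax y 1 * (1 + rho (INR n))).

Lemma slice_factor_ge n : 1 <= 1 + rho (INR n).
Proof. destruct rho_K as [_ [Hnn _]]. pose proof (Hnn (INR n) (pos_INR n)). lra. Qed.

Lemma slice_time_ge n y : 1 <= Rmax y 1 <= Rmax y 1 * (1 + rho (INR n)).
Proof. pose proof (slice_factor_ge n). pose proof (Rmax_r y 1). split; nra. Qed.

Lemma slice_nonneg n y : 0 <= slice n y.
Proof.
  destruct beta_KL as [_ [Hnn _]]. pose proof (slice_time_ge n y). pose proof (pos_INR n).
  apply Hnn; lra.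
Qed.

Lemma slice_antitone n y1 y2 : y1 <= y2 -> slice n y2 <= slice n y1.
Proof.
  intros h. destruct beta_KL as [_ [_ [_ Hdec]]].
  destruct (Hdec (INR n + 1)) as [Hanti _]; [pose proof (pos_INR n); lra|].
  pose proof (slice_time_ge n y1). pose proof (slice_factor_ge n).
  apply Hanti; [lra|]. apply Rmult_le_compat_r; [lra|]. apply Rle_max_compat_r, h.
Qed.

Lemma slice_vanishing n eps : 0 < eps -> exists T, forall y, T <= y -> slice n y < eps.
Proof.
  intros heps. destruct beta_KL as [_ [_ [_ Hdec]]].
  destruct (Hdec (INR n + 1)) as [_ Hvan]; [pose proof (pos_INR n); lra|].
  destruct (Hvan eps heps) as [T [_ HT]]. exists T. intros y hy. apply HT.
  pose proof (slice_time_ge n y). pose proof (Rmax_l y 1). lra.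
Qed.

Lemma slice_continuity n : continuity (slice n).
Proof.
  intros y eps heps. destruct beta_KL as [Hcont _].
  set (a := 1 + rho (INR n)).
  pose proof (slice_time_ge n y) as hy. fold a in hy.
  assert (ha : 1 <= a) by (destruct hy; nra).
  destruct (Hcont (INR n + 1) (Rmax y 1 * a)) with eps as [d [hd Hd]];
    [pose proof (pos_INR n); lra|lra|exact heps|].
  exists (d / a). split; [apply Rdiv_pos_pos; lra|].
  intros z [_ hz]. simpl in *. unfold R_dist in *. unfold slice. fold a.
  pose proof (slice_time_ge n z) as hz'. fold a in hz'.
  apply Hd; [pose proof (pos_INR n); lra|lra|..].
  - rewrite Rminus_diag, Rabs_R0; lra.
  - rewrite <- Rmult_minus_distr_r, Rabs_mult, (Rabs_pos_eq a) by lra.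
    rewrite !(Rmax_comm _ 1). pose proof (Rmax_nonexpansive_r 1 z y).
    apply (Rmult_lt_compat_r a) in hz; [|lra].
    replace (d / a * a) with d in hz by (field; lra).
    pose proof (Rabs_pos (Rmax 1 z - Rmax 1 y)). nra.
Qed.

Lemma beta_le_slice n r t :
  INR n <= r <= INR n + 1 -> 0 <= t -> 1 <= t / (1 + rho r) ->
  beta r t <= slice n (t / (1 + rho r)).
Proof.
  intros [hnr hrn] ht htau.
  destruct beta_KL as [_ [_ [HK Hdec]]].
  pose proof (pos_INR n) as hn.
  destruct rho_K as [_ [Hrho _]]. pose proof (Hrho r ltac:(lra)).
  set (tau := t / (1 + rho r)) in *.
  assert (ht_eq : t = tau * (1 + rho r)) by (unfold tau; field; lra).
  apply Rle_trans with (beta (INR n + 1) t); [apply (classK_le _ _ _ (HK t ht)); lra|].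
  unfold slice. rewrite Rmax_left by lra.
  destruct (Hdec (INR n + 1)) as [Hanti _]; [lra|].
  pose proof (classK_le rho (INR n) r rho_K hn hnr).
  apply Hanti; [pose proof (Hrho (INR n) hn); nra|]. nra.
Qed.

Variable c : nat -> R.
Hypothesis beta_small_after_c : forall m t, c m <= t -> beta (INR m + 2) t < (/ 2) ^ S m.
Hypothesis rho_ge_c : forall m, c m <= rho (INR (S m)).

Lemma slice_le n y : slice n y <= (1 + beta 1 0) * (/ 2) ^ n.
Proof.
  destruct beta_KL as [_ [Hnn [_ Hdec]]].
  pose proof (Hnn 1 0 ltac:(lra) ltac:(lra)).
  pose proof (slice_time_ge n y).
  destruct n as [|m].
  - destruct (Hdec 1 ltac:(lra)) as [Hanti _].
    unfold slice. simpl INR in *. rewrite Rplus_0_l, pow_O.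
    pose proof (Hanti 0 (Rmax y 1 * (1 + rho 0)) ltac:(lra) ltac:(lra)). lra.
  - assert (hpow : 0 < (/ 2) ^ S m) by (apply pow_lt; lra).
    assert (hc : c m <= Rmax y 1 * (1 + rho (INR (S m)))).
    { pose proof (rho_ge_c m). nra. }
    unfold slice. replace (INR (S m) + 1) with (INR m + 2) by (rewrite S_INR; ring).
    pose proof (beta_small_after_c m _ hc). nra.
Qed.

End Slices.

Definition beta_hat (sigma : R -> R) (beta : R -> R -> R) (phi : R -> R) (s t : R) : R :=
  beta s t + Rmax 0 (sigma s - Rmax 0 (t - 1)) + Rmin (sigma s) (phi t).

Section BetaHat.
Variables (sigma : R -> R) (beta : R -> R -> R) (phi : R -> R).
Hypothesis sigma_K : classK sigma.
Hypothesis beta_KL : classKL beta.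
Hypothesis phi_L : classL phi.

Lemma beta_hat_continuous : cont2_nonneg (beta_hat sigma beta phi).
Proof.
  destruct sigma_K as [Hsigma _]. destruct beta_KL as [Hbeta _]. destruct phi_L as [Hphi _].
  assert (Hid : cont_nonneg (fun t => t)).
  { intros x _ eps heps. exists eps. split; [lra|]. intros y _ h. exact h. }
  unfold beta_hat.
  apply (cont2_nonneg_comp Rplus (fun s t => beta s t + Rmax 0 (sigma s - Rmax 0 (t - 1)))
           (fun s t => Rmin (sigma s) (phi t)) nonexpansive2_Rplus).
  - apply (cont2_nonneg_comp Rplus beta (fun s t => Rmax 0 (sigma s - Rmax 0 (t - 1)))
             nonexpansive2_Rplus Hbeta).
    apply (cont2_nonneg_comp _ (fun s _ => sigma s) (fun _ t => t) nonexpansive2_clip);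
      [apply cont2_nonneg_fst|apply cont2_nonneg_snd]; assumption.
  - apply (cont2_nonneg_comp Rmin (fun s _ => sigma s) (fun _ t => phi t) nonexpansive2_Rmin);
      [apply cont2_nonneg_fst|apply cont2_nonneg_snd]; assumption.
Qed.

Lemma beta_hat_nonneg s t : 0 <= s -> 0 <= t -> 0 <= beta_hat sigma beta phi s t.
Proof.
  intros hs ht. destruct sigma_K as [_ [Hsigma _]]. destruct beta_KL as [_ [Hbeta _]].
  destruct phi_L as [_ [Hphi _]].
  pose proof (Hsigma s hs). pose proof (Hbeta s t hs ht). pose proof (Hphi t ht).
  unfold beta_hat. case_Rabs_Rmin_Rmax; lra.
Qed.

Lemma classKL_beta_hat : classKL (beta_hat sigma beta phi).
Proof.
  pose proof sigma_K as [_ [Hsigma_nn [Hsigma_inc Hsigma0]]].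
  pose proof beta_KL as [_ [_ [HK Hdec]]].
  pose proof phi_L as [_ [Hphi_nn [Hphi_anti Hphi_van]]].
  split; [exact beta_hat_continuous|split; [exact beta_hat_nonneg|split]].
  - intros t ht. destruct (HK t ht) as [_ [_ [Hbeta_inc Hbeta0]]].
    split; [exact (cont_nonneg_section _ t beta_hat_continuous ht)|].
    split; [intros s hs; exact (beta_hat_nonneg s t hs ht)|split].
    + intros x y hx hxy. pose proof (Hbeta_inc x y hx hxy). pose proof (Hsigma_inc x y hx hxy).
      unfold beta_hat. case_Rabs_Rmin_Rmax; lra.
    + unfold beta_hat. rewrite Hbeta0, Hsigma0. pose proof (Hphi_nn t ht).
      case_Rabs_Rmin_Rmax; lra.
  - intros s hs. destruct (Hdec s hs) as [Hbeta_anti Hbeta_van]. split.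
    + intros t1 t2 h1 h12. pose proof (Hbeta_anti t1 t2 h1 h12). pose proof (Hphi_anti t1 t2 h1 h12).
      unfold beta_hat. case_Rabs_Rmin_Rmax; lra.
    + intros eps heps.
      destruct (Hbeta_van (eps / 2)) as [T1 [hT1 H1]]; [lra|].
      destruct (Hphi_van (eps / 2)) as [T2 H2]; [lra|].
      exists (Rmax (Rmax T1 T2) (1 + sigma s)). split; [case_Rabs_Rmin_Rmax; lra|].
      intros t ht.
      assert (T1 <= t /\ T2 <= t /\ 1 + sigma s <= t) as [h1 [h2 h3]] by (case_Rabs_Rmin_Rmax; lra).
      specialize (H1 t h1). specialize (H2 t h2).
      unfold beta_hat. case_Rabs_Rmin_Rmax; lra.
Qed.

Lemma Rmin_le_beta_hat s tau b :
  0 <= s -> 0 <= tau -> (1 <= tau -> b <= phi tau) ->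
  Rmin (sigma s) b <= beta_hat sigma beta phi s tau.
Proof.
  intros hs htau Hb. destruct sigma_K as [_ [Hsigma _]]. destruct beta_KL as [_ [Hbeta _]].
  destruct phi_L as [_ [Hphi _]].
  pose proof (Hsigma s hs). pose proof (Hbeta s tau hs htau). pose proof (Hphi tau htau).
  unfold beta_hat. destruct (Rle_lt_dec 1 tau) as [h1|h1];
    [specialize (Hb h1)|]; case_Rabs_Rmin_Rmax; lra.
Qed.

End BetaHat.

Theorem lemmaA1 (sigma : R -> R) (beta : R -> R -> R) :
  classK sigma -> classKL beta ->
  exists (rho_hat : R -> R) (beta_hat : R -> R -> R),
    classK rho_hat /\ classKL beta_hat /\
    forall t r s, 0 <= t -> 0 <= r -> 0 <= s ->
      Rmin (sigma s) (beta r t) <= beta_hat s (t / (1 + rho_hat r)).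
Proof.
  intros sigma_K beta_KL.
  destruct (functional_choice
    (fun m T => 0 <= T /\ forall t, T <= t -> beta (INR m + 2) t < (/ 2) ^ S m)) as [c Hc].
  { intros m. destruct beta_KL as [_ [_ [_ Hdec]]].
    destruct (Hdec (INR m + 2)) as [_ Hvan]; [pose proof (pos_INR m); lra|].
    apply Hvan, pow_lt; lra. }
  pose proof (ramp_fun_classK c (fun m => proj1 (Hc m))) as rho_K.
  pose proof (ramp_fun_ge c (fun m => proj1 (Hc m))) as rho_ge_c.
  set (rho := ramp_fun c) in *.
  destruct (exists_classL_envelope (slice beta rho) (fun n => (1 + beta 1 0) * (/ 2) ^ n)
              ((1 + beta 1 0) * 2)) as [phi [phi_L Hphi]].
  - exact (slice_continuity beta rho beta_KL rho_K).
  - exact (slice_nonneg beta rho beta_KL rho_K).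
  - exact (slice_le beta rho beta_KL rho_K c (fun m => proj2 (Hc m)) rho_ge_c).
  - apply geometric_majorant_summable.
  - exact (slice_antitone beta rho beta_KL rho_K).
  - exact (slice_vanishing beta rho beta_KL rho_K).
  - exists rho, (beta_hat sigma beta phi).
    split; [exact rho_K|split; [exact (classKL_beta_hat sigma beta phi sigma_K beta_KL phi_L)|]].
    intros t r s ht hr hs.
    pose proof rho_K as [_ [Hrho _]]. pose proof (Hrho r hr).
    apply Rmin_le_beta_hat; auto.
    + unfold Rdiv. apply Rmult_le_pos; [lra|]. apply Rlt_le, Rinv_0_lt_compat. lra.
    + intros htau. destruct (nat_bracket r hr) as [n hn].
      apply Rle_trans with (slice beta rho n (t / (1 + rho r))); [|apply Hphi].
      apply beta_le_slice; assumption.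
Qed.
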